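(* Fix a single machine with nonnegative real parameters $k^A,k^B,t^A,t^B$, and let $f(a,b)$, $cost^A$, $cost^B$, $mcost^A$ and $cost(a,b,s)$ be as defined in the context. Then for all integers $a,b\ge 0$, $$f(a,b)=\min_{0\le s\le \min(b,a+1)} cost(a,b,s).$$
   Context: A machine processes jobs of two types, A and B, in batches. A schedule for the task-combination $(a,b)$ is a finite sequence of batches, each a nonempty group of jobs of a single type, with consecutive batches of different types, processing exactly $a$ A-jobs and $b$ B-jobs in total. An A-batch of $x$ jobs takes $t^A+k^A x^2$ time units, a B-batch of $x$ jobs takes $t^B+k^B x^2$ time units; the time of a schedule is the sum of its batch times (empty schedule: time $0$). $f(a,b)$ is the minimum time over all schedules for $(a,b)$. For integers $a,s\ge 0$ define $cost^A(a,s)=\min\{s\,t^A+k^A(x_1^2+\dots+x_s^2) : x_1+\dots+x_s=a,\ x_i\in\mathbb{Z}_{\ge 0}\}$ (empty batches allowed here), with $cost^A(0,0)=0$ and $cost^A(a,0)=+\infty$ for $a>0$; $cost^B(b,s)$ is defined analogously with $t^B,k^B$. Define $mcost^A(a,s)=\min\{cost^A(a,s') : s'\in\{s-1,s,s+1\},\ s'\ge 0\}$ and $cost(a,b,s)=cost^B(b,s)+mcost^A(a,s)$, with the usual arithmetic conventions for $+\infty$. *)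

From HB Require Import structures.
From mathcomp Require Import all_boot all_order all_algebra.
From mathcomp Require Import boolp classical_sets reals constructive_ereal ereal.
Set Implicit Arguments. Unset Strict Implicit. Unset Printing Implicit Defensive.
Import Order.TTheory GRing.Theory Num.Theory.
Local Open Scope ring_scope.
Local Open Scope classical_set_scope.

(* A batch is a pair (type, size): type = true for A, false for B. *)
Definition batch := (bool * nat)%type.

Section Machine.
Variables (R : realType) (kA kB tA tB : R).

Definition batch_time (p : batch) : R :=
  if p.1 then tA + kA * (p.2 ^ 2)%:R else tB + kB * (p.2 ^ 2)%:R.

Definition sched_time (s : seq batch) : R := \sum_(p <- s) batch_time p.

Definition is_schedule (a b : nat) (s : seq batch) : Prop :=
  [/\ all (fun p : batch => 0 < p.2)%N s,
      sorted (fun p q : batch => p.1 != q.1) s,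
      (\sum_(p <- s | p.1) p.2)%N = a &
      (\sum_(p <- s | ~~ p.1) p.2)%N = b].

Definition f (a b : nat) : \bar R :=
  ereal_inf [set (sched_time s)%:E | s in is_schedule a b].

(* cost(a,s) = min { s t + k (x_1^2+...+x_s^2) : x_1+...+x_s = a, x_i >= 0 };
   empty min = +oo (so cost(a,0) = +oo for a>0, cost(0,0) = 0). *)
Definition gcost (t k : R) (a s : nat) : \bar R :=
  \big[Order.min/+oo%E]_(x : {ffun 'I_s -> 'I_a.+1} | (\sum_(i < s) x i)%N == a)
     ((s%:R * t + k * (\sum_(i < s) (x i ^ 2)%N)%:R)%:E).

Definition costA (a s : nat) : \bar R := gcost tA kA a s.
Definition costB (b s : nat) : \bar R := gcost tB kB b s.

Definition mcostA (a s : nat) : \bar R :=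
  Order.min (Order.min (costA a s) (costA a s.+1))
            (if s is s'.+1 then costA a s' else +oo%E).

Definition cost (a b s : nat) : \bar R := (costB b s + mcostA a s)%E.

End Machine.

From HB Require Import structures.
From mathcomp Require Import all_boot all_order all_algebra.
From mathcomp Require Import boolp classical_sets reals constructive_ereal ereal.
From mathcomp Require Import zify ring.
Set Implicit Arguments. Unset Strict Implicit. Unset Printing Implicit Defensive.
Import Order.TTheory GRing.Theory Num.Theory.

(* A schedule is determined by the sequences of its A-batch sizes and of its
   B-batch sizes: both have positive entries, their lengths differ by at most
   one, and the time of the schedule is the sum of the costs of the two
   sequences.  Conversely, two such balanced sequences interleave into a
   schedule.  Taking s to be the number of B-batches, every schedule therefore
   costs at least cost(a,b,s), with s <= min(b, a+1).  For the other bound,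
   an optimal splitting realising cost^B(b,s) or cost^A(a,s') may have empty
   parts; dropping them and then splitting parts larger than one yields
   min(s,b), resp. min(s',a), positive parts at no greater cost (t, k >= 0),
   and s <= min(b, a+1) keeps the two sequences balanced. *)

Definition sumsq (l : seq nat) : nat := sumn [seq x ^ 2 | x <- l].

Lemma perm_sumsq [l1 l2 : seq nat] : perm_eq l1 l2 -> sumsq l1 = sumsq l2.
Proof. by move=> /(perm_map (fun x => x ^ 2)) /perm_sumn. Qed.

Lemma sumn_le_size [l : seq nat] : all (fun x => x <= 1) l -> sumn l <= size l.
Proof. by elim: l => //= x l IH /andP[x_le1 /IH]; lia. Qed.

Lemma size_le_sumn [l : seq nat] : all (fun x => 0 < x) l -> size l <= sumn l.
Proof. by elim: l => //= x l IH /andP[x_gt0 /IH]; lia. Qed.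

Lemma sumn_map_filter_gt0 (g : nat -> nat) (l : seq nat) : g 0 = 0 ->
  sumn [seq g x | x <- l & 0 < x] = sumn (map g l).
Proof. by move=> g0; elim: l => //= -[|x] l /= ->; rewrite ?g0. Qed.

(* While [size l < n <= sumn l] some part [z] exceeds 1; splitting it into [1]
   and [z - 1] adds a part without increasing the sum of squares. *)
Lemma refine_parts (n : nat) (l : seq nat) :
  all (fun x => 0 < x) l -> size l <= n <= sumn l ->
  exists l' : seq nat, [/\ all (fun x => 0 < x) l', size l' = n,
    sumn l' = sumn l & sumsq l' <= sumsq l].
Proof.
move dE: (n - size l) => d; elim: d l dE => [|d IH] l dE l_pos /andP[size_le le_sum].
  by exists l; split => //; lia.
have /hasP[z z_l z_gt1] : has (fun x => 1 < x) l.
  apply/negPn/negP => /hasPn l_le1.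
  have : sumn l <= size l.
    by apply: sumn_le_size; apply/allP => x /l_le1; rewrite -leqNgt.
  lia.
have [r l_perm] : exists r : seq nat, perm_eq l (z :: r).
  by exists (rem z l); apply: perm_to_rem.
have l_size : size l = (size r).+1 by rewrite (perm_size l_perm).
have l_sum : sumn l = z + sumn r by rewrite (perm_sumn l_perm).
have [|||l' [l'_pos l'_size l'_sum l'_sq]] := IH [:: 1, z.-1 & r].
- by rewrite /=; lia.
- by move: l_pos; rewrite (perm_all _ l_perm) /= => /andP[_ ->]; rewrite andbT; lia.
- by rewrite /=; lia.
exists l'; split => //; first by rewrite l'_sum /=; lia.
have split_sq : 1 + z.-1 ^ 2 <= z ^ 2 by move: z_gt1; clear; case: z => [|[|w]] //= _; nia.
rewrite (perm_sumsq l_perm); apply: (leq_trans l'_sq); rewrite /sumsq /=; lia.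
Qed.

Lemma positive_parts (l : seq nat) :
  exists l' : seq nat, [/\ all (fun x => 0 < x) l', size l' = minn (size l) (sumn l),
    sumn l' = sumn l & sumsq l' <= sumsq l].
Proof.
pose l0 := [seq x <- l | 0 < x].
have l0_sum : sumn l0 = sumn l.
  by have := @sumn_map_filter_gt0 id l erefl; rewrite !map_id.
have l0_sq : sumsq l0 = sumsq l by rewrite /sumsq sumn_map_filter_gt0.
have l0_pos : all (fun x => 0 < x) l0 by apply: filter_all.
have [|l' [l'_pos l'_size l'_sum l'_sq]] := @refine_parts (minn (size l) (sumn l)) l0 l0_pos.
  have := size_le_sumn l0_pos; have := count_size (fun x => 0 < x) l.
  by rewrite size_filter; lia.
by exists l'; split; rewrite ?l'_sum ?l0_sum -?l0_sq.
Qed.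

Local Open Scope ring_scope.

Section OneBatchType.
Variables (R : realType) (t k : R).

Definition batches_time (l : seq nat) : R := (size l)%:R * t + k * (sumsq l)%:R.

Lemma batches_timeE (l : seq nat) :
  batches_time l = \sum_(x <- l) (t + k * (x ^ 2)%:R).
Proof.
rewrite /batches_time; elim: l => [|x l IH].
  by rewrite big_nil /sumsq /= mul0r mulr0 addr0.
by rewrite big_cons -IH /sumsq /= natrD; ring.
Qed.

Lemma gcost_le_batches_time (l : seq nat) :
  (gcost t k (sumn l) (size l) <= (batches_time l)%:E)%E.
Proof.
pose x : {ffun 'I_(size l) -> 'I_(sumn l).+1} := [ffun i : 'I__ => inord (nth 0 l i)].
have xE i : x i = nth 0 l i :> nat.
  rewrite ffunE inordK // ltnS sumnE (big_nth 0) big_mkord.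
  by rewrite (bigD1 i) //= leq_addr.
apply: (bigmin_inf x).
  apply/eqP; transitivity (\sum_(i < size l) nth 0 l i)%N.
    by apply: eq_bigr => i _; rewrite xE.
  by rewrite sumnE (big_nth 0) big_mkord.
rewrite lee_fin /batches_time; under eq_bigr do rewrite xE.
by rewrite /sumsq sumnE big_map (big_nth 0) big_mkord.
Qed.

Lemma gcost_cases (a s : nat) : gcost t k a s = +oo%E \/
  exists2 l : seq nat, size l = s /\ sumn l = a & gcost t k a s = (batches_time l)%:E.
Proof.
rewrite /gcost; elim/big_ind: _ => [|u v|x /eqP x_sum]; first by left.
- by rewrite minEle; case: ifP.
right; exists [seq (x i : nat) | i <- enum 'I_s].
  by rewrite size_map size_enum_ord sumnE big_map big_enum.
by rewrite /batches_time /sumsq size_map size_enum_ord -map_comp sumnE big_map big_enum.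
Qed.

Lemma gcost_neqNy (a s : nat) : gcost t k a s != -oo%E.
Proof. by case: (gcost_cases a s) => [->|[l _ ->]]. Qed.

Hypotheses (t_ge0 : 0 <= t) (k_ge0 : 0 <= k).

Lemma batches_time_le (l l' : seq nat) :
  (size l' <= size l)%N -> (sumsq l' <= sumsq l)%N -> batches_time l' <= batches_time l.
Proof.
move=> size_le sq_le; rewrite /batches_time.
by rewrite lerD // ?ler_wpM2l // ?ler_wpM2r // ler_nat.
Qed.

End OneBatchType.

Definition sizes_of (c : bool) (s : seq batch) : seq nat := [seq p.2 | p <- s & p.1 == c].

Lemma is_scheduleE (a b : nat) (s : seq batch) : is_schedule a b s <->
  [/\ all (fun x => 0 < x)%N (sizes_of true s), all (fun x => 0 < x)%N (sizes_of false s),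
      sorted (fun p q : batch => p.1 != q.1) s,
      sumn (sizes_of true s) = a & sumn (sizes_of false s) = b].
Proof.
have sumE c : (\sum_(p <- s | p.1 == c) p.2)%N = sumn (sizes_of c s).
  by rewrite sumnE big_map big_filter.
have sumA : (\sum_(p <- s | p.1) p.2)%N = sumn (sizes_of true s).
  by rewrite -sumE; apply: eq_bigl => p; rewrite eqb_id.
have sumB : (\sum_(p <- s | ~~ p.1) p.2)%N = sumn (sizes_of false s).
  by rewrite -sumE; apply: eq_bigl => p; rewrite eqbF_neg.
have allE : all (fun p : batch => 0 < p.2)%N s =
    all (fun x => 0 < x)%N (sizes_of true s) && all (fun x => 0 < x)%N (sizes_of false s).
  rewrite /sizes_of; elim: s {sumE sumA sumB} => //= -[[] x] s /= ->.
    exact: andbA.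
  exact: andbCA.
rewrite /is_schedule allE sumA sumB.
by split=> [[/andP[]]|[-> ->]]; [|split].
Qed.

Lemma sched_time_sizes_of (R : realType) (kA kB tA tB : R) (s : seq batch) :
  sched_time kA kB tA tB s =
  batches_time tA kA (sizes_of true s) + batches_time tB kB (sizes_of false s).
Proof.
rewrite /sched_time (bigID (fun p : batch => p.1)) /= !batches_timeE !big_map !big_filter.
by congr (_ + _); apply: eq_big => -[[] x].
Qed.

(* Once one list runs out the rest of the other is appended: for lists whose
   lengths differ by at most one, that is at most one batch. *)
Fixpoint interleave (c : bool) (l1 l2 : seq nat) : seq batch :=
  match l1, l2 with
  | x :: l1', y :: l2' => (c, x) :: (~~ c, y) :: interleave c l1' l2'
  | _, _ => [seq (c, x) | x <- l1] ++ [seq (~~ c, y) | y <- l2]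
  end.

Lemma sizes_of_cat (c : bool) (s1 s2 : seq batch) :
  sizes_of c (s1 ++ s2) = sizes_of c s1 ++ sizes_of c s2.
Proof. by rewrite /sizes_of filter_cat map_cat. Qed.

Lemma sizes_of_cons (c : bool) (p : batch) (s : seq batch) :
  sizes_of c (p :: s) = if p.1 == c then p.2 :: sizes_of c s else sizes_of c s.
Proof. by rewrite /sizes_of /=; case: ifP. Qed.

Lemma sizes_of_map (c c' : bool) (l : seq nat) :
  sizes_of c [seq (c', x) | x <- l] = if c' == c then l else [::].
Proof.
rewrite /sizes_of; elim: l => [|x l IH] /=; first by case: eqP.
by case: (c' == c) IH => /= ->.
Qed.

Lemma sizes_of_interleave (c : bool) (l1 l2 : seq nat) :
  sizes_of c (interleave c l1 l2) = l1 /\ sizes_of (~~ c) (interleave c l1 l2) = l2.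
Proof.
case: c; elim: l1 l2 => [|x l1 IH] [|y l2];
  rewrite ?sizes_of_cons ?sizes_of_cat ?sizes_of_map ?cats0 //=;
  by case: (IH l2) => -> ->.
Qed.

Lemma sorted_interleave (c : bool) (l1 l2 : seq nat) :
  (size l2 <= size l1 <= (size l2).+1)%N ->
  sorted (fun p q : batch => p.1 != q.1) (interleave c l1 l2).
Proof.
suff path_interleave x : (size l2 <= size l1 <= (size l2).+1)%N ->
    path (fun p q : batch => p.1 != q.1) (~~ c, x) (interleave c l1 l2).
  by case: (interleave c l1 l2) (path_interleave 0%N) => //= p s H /H /andP[].
elim: l1 l2 x => [|x l1 IH] [|y l2] w //=; last by move=> /IH -> {IH}; case: c.
by case: l1 {IH} => //=; case: c.
Qed.

Lemma path_neq_count (x : bool) (t : seq bool) : path (fun u v => u != v) x t ->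
  (count (pred1 (~~ x)) (x :: t) <= count (pred1 x) (x :: t)
     <= (count (pred1 (~~ x)) (x :: t)).+1)%N.
Proof. by elim: t x => [|y t IH] [] //=; case: y => //= /IH /=; lia. Qed.

Lemma sorted_sizes_of_balanced (c : bool) (s : seq batch) :
  sorted (fun p q : batch => p.1 != q.1) s ->
  (size (sizes_of c s) <= (size (sizes_of (~~ c) s)).+1)%N.
Proof.
have countE b : count (fun p : batch => p.1 == b) s = count (pred1 b) (map fst s).
  by rewrite count_map.
rewrite !size_map !size_filter !countE => s_sorted.
have : sorted (fun u v : bool => u != v) (map fst s) by rewrite sorted_map.
case: (map fst s) => //= x t /path_neq_count.
by case: x; case: c => /=; lia.
Qed.

Section Machine.
Variables (R : realType) (kA kB tA tB : R).

Lemma mcostA_le (a s s0 : nat) : (s <= s0.+1 <= s.+2)%N ->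
  (mcostA kA tA a s <= costA kA tA a s0)%E.
Proof.
move=> s0_near; have [->|[->|->]] : s0 = s \/ s0 = s.+1 \/ s = s0.+1 by lia.
all: by rewrite /mcostA !ge_min lexx ?orbT.
Qed.

Lemma mcostA_attained (a s : nat) :
  exists2 s0, (s <= s0.+1 <= s.+2)%N & mcostA kA tA a s = costA kA tA a s0.
Proof.
have min_cases (x y : \bar R) : Order.min x y = x \/ Order.min x y = y.
  by rewrite minEle; case: ifP; [left|right].
rewrite /mcostA; move: (costA kA tA a) => c.
case: s => [|s]; first rewrite [Order.min _ +oo%E]minEle leey.
  by case: (min_cases (c 0%N) (c 1%N)) => ->; [exists 0%N|exists 1%N].
case: (min_cases (Order.min (c s.+1) (c s.+2)) (c s)) => ->; last by exists s => //; lia.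
by case: (min_cases (c s.+1) (c s.+2)) => ->; [exists s.+1|exists s.+2] => //; lia.
Qed.

Hypotheses (kA_ge0 : 0 <= kA) (kB_ge0 : 0 <= kB) (tA_ge0 : 0 <= tA) (tB_ge0 : 0 <= tB).

Lemma f_le_batches_time (lA lB : seq nat) :
  all (fun x => 0 < x)%N lA -> all (fun x => 0 < x)%N lB ->
  (size lA <= (size lB).+1)%N -> (size lB <= (size lA).+1)%N ->
  (f kA kB tA tB (sumn lA) (sumn lB) <= (batches_time tA kA lA + batches_time tB kB lB)%:E)%E.
Proof.
move=> lA_pos lB_pos lA_le lB_le.
pose sch := if (size lB <= size lA)%N then interleave true lA lB else interleave false lB lA.
have [schA schB] : sizes_of true sch = lA /\ sizes_of false sch = lB.
  rewrite /sch; case: ifP => _; first exact: sizes_of_interleave.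
  by have [] := sizes_of_interleave false lB lA.
have sch_sorted : sorted (fun p q : batch => p.1 != q.1) sch.
  by rewrite /sch; case: ifPn => ?; apply: sorted_interleave; lia.
apply: (@le_trans _ _ (sched_time kA kB tA tB sch)%:E).
  by apply: ereal_inf_lbound; exists sch => //; apply/is_scheduleE; rewrite schA schB.
by rewrite sched_time_sizes_of schA schB.
Qed.

Lemma f_le_costs (a b s s0 : nat) : (s <= b)%N -> (s <= a.+1)%N ->
  (s <= s0.+1 <= s.+2)%N ->
  (f kA kB tA tB a b <= costB kB tB b s + costA kA tA a s0)%E.
Proof.
move=> s_le_b s_le_a s0_near.
case: (gcost_cases tB kB b s) => [eB|[lB [lB_size lB_sum] eB]].
  by rewrite /costB eB addye ?leey // gcost_neqNy.
case: (gcost_cases tA kA a s0) => [eA|[lA [lA_size lA_sum] eA]].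
  by rewrite /costA eA addey ?leey // gcost_neqNy.
have [lB' [lB'_pos lB'_size lB'_sum lB'_sq]] := positive_parts lB.
have [lA' [lA'_pos lA'_size lA'_sum lA'_sq]] := positive_parts lA.
rewrite /costB /costA eB eA -lA_sum -lB_sum -lA'_sum -lB'_sum.
apply: le_trans (f_le_batches_time lA'_pos lB'_pos _ _) _; try lia.
by rewrite -EFinD lee_fin addrC lerD // batches_time_le //; lia.
Qed.

Lemma min_cost_le_sched_time (a b : nat) (s : seq batch) : is_schedule a b s ->
  (\big[Order.min/+oo%E]_(j < (minn b a.+1).+1) cost kA kB tA tB a b j
     <= (sched_time kA kB tA tB s)%:E)%E.
Proof.
move=> /is_scheduleE[posA posB s_sorted sumA sumB].
have /= balA := sorted_sizes_of_balanced true s_sorted.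
have /= balB := sorted_sizes_of_balanced false s_sorted.
have := size_le_sumn posA; have := size_le_sumn posB; rewrite sumA sumB => leB leA.
have j_lt : (size (sizes_of false s) < (minn b a.+1).+1)%N by lia.
apply: (bigmin_inf (Ordinal j_lt)) => //=.
rewrite /cost sched_time_sizes_of EFinD [leRHS]addeC; apply: leeD.
  by rewrite /costB -sumB gcost_le_batches_time.
apply: (@le_trans _ _ (costA kA tA a (size (sizes_of true s)))).
  by apply: mcostA_le; lia.
by rewrite /costA -sumA gcost_le_batches_time.
Qed.

End Machine.

Theorem lemma1 (R : realType) (kA kB tA tB : R)
  (hkA : 0 <= kA) (hkB : 0 <= kB) (htA : 0 <= tA) (htB : 0 <= tB)
  (a b : nat) :
  f kA kB tA tB a b =
  \big[Order.min/+oo%E]_(s < (minn b a.+1).+1) cost kA kB tA tB a b s.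
Proof.
apply/eqP; rewrite eq_le; apply/andP; split.
- apply: le_bigmin => [|[s s_lt] _ /=]; first exact: leey.
  rewrite /cost; have [s0 s0_near ->] := mcostA_attained kA tA a s.
  by apply: f_le_costs => //; lia.
- by apply/ereal_infP => _ [sch sch_ok <-]; apply: min_cost_le_sched_time.
Qed.
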